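(* Let $\mathcal{L}$ be a countable language, let $\phi$ be an $\mathcal{L}_{\omega_1,\omega}$-sentence and let $\alpha<\omega_1$. Assume that for every $\gamma<\alpha$ the set $\Psi_\gamma(\phi)$ is countable (so that $X_\alpha(\phi)$ is a standard Borel space). Then (1) the function $Mod(\phi)\times\omega^{<\omega}\to X_\alpha(\phi)$ given by $(\mathcal{M},\vec a)\mapsto \phi^{\vec a,\mathcal{M}}_\alpha$ is Borel, and (2) $\Psi_\alpha(\phi)$ and $\Phi_\alpha(\phi)$ are $\mathbf{\Sigma}^1_1$ subsets of $X_\alpha(\phi)$.
   Context: $\mathcal{L}_{\omega_1,\omega}$ is the infinitary logic over $\mathcal{L}$ with countable conjunctions/disjunctions and finite quantifier strings. $Mod(\mathcal{L})$ is the set of $\mathcal{L}$-structures with universe $\mathbb{N}$, with the topology whose basic open sets are $\{M\in Mod(\mathcal{L}) \mid M\models\varphi(n_1,\dots,n_m)\}$ for quantifier-free $\varphi$ and $n_1,\dots,n_m\in\mathbb{N}$; it is Polish. For a sentence $\sigma$, $Mod(\sigma)$ is the set of members of $Mod(\mathcal{L})$ satisfying $\sigma$, a standard Borel space with the inherited Borel structure. Elements of $\omega^{<\omega}$ are finite tuples $\vec a$ of elements of $\mathbb{N}$. $\alpha$-types: for a countable structure $\mathcal{M}$ and a finite tuple $\vec a$ from $\mathcal{M}$ (with $\vec x$ a tuple of variables of the same length), define formulas by recursion: $\phi^{\vec a,\mathcal{M}}_0(\vec x)=\bigwedge\{\psi(\vec x)\mid \psi$ atomic or negated atomic, $\mathcal{M}\models\psi(\vec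 a)\}$; $\phi^{\vec a,\mathcal{M}}_{\alpha+1}=\phi^{\vec a,\mathcal{M}}_\alpha\wedge\bigwedge\{\exists\vec y\,\phi^{\vec a\frown\vec b,\mathcal{M}}_\alpha(\vec x,\vec y)\mid \vec b$ a finite tuple from $\mathcal{M}\}\wedge\bigwedge_n\forall y_0\dots y_n\bigvee\{\phi^{\vec a\frown\vec b,\mathcal{M}}_\alpha(\vec x,y_0,\dots,y_n)\mid\vec b\in\mathcal{M}^{n+1}\}$; $\phi^{\vec a,\mathcal{M}}_\lambda=\bigwedge_{\alpha<\lambda}\phi^{\vec a,\mathcal{M}}_\alpha$ for limit $\lambda$. Formulas are compared syntactically. $\Psi_\alpha(\phi)=\{\phi^{\vec a,\mathcal{M}}_\alpha\mid \mathcal{M}$ countable, $\mathcal{M}\models\phi$, $\vec a$ a tuple from $\mathcal{M}\}$ and $\Phi_\alpha(\phi)=\{\phi^{\emptyset,\mathcal{M}}_\alpha\mid \mathcal{M}$ countable, $\mathcal{M}\models\phi\}$. The space $X_\alpha(\phi)$: for $\alpha=0$, $X_0(\phi)=2^A$ where $A$ is the (countable) set of atomic and negated atomic formulas, and $\phi^{\vec a,\mathcal{M}}_0$ is identified with $\{\psi\in A\mid\mathcal{M}\models\psi(\vec a)\}$; for $\alpha=\gamma+1$, $X_\alpha(\phi)=2^{\Psi_\gamma(\phi)}$ and $\phi^{\vec a,\mathcal{M}}_{\gamma+1}$ is identified with $\{\phi^{\vec a\frown\vec b,\mathcal{M}}_\gamma\mid\vec b$ a finite tuple from $\mathcal{M}\}$;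 for $\alpha$ limit, $X_\alpha(\phi)=2^{\bigcup_{\gamma<\alpha}\Psi_\gamma(\phi)}$ and $\phi^{\vec a,\mathcal{M}}_\alpha$ is identified with $\{\phi^{\vec a,\mathcal{M}}_\gamma\mid\gamma<\alpha\}$. Via these identifications $\Psi_\alpha(\phi),\Phi_\alpha(\phi)\subseteq X_\alpha(\phi)$; when the index set is countable, $X_\alpha(\phi)$ carries the product (Cantor) topology and is a standard Borel space. *)

From Stdlib Require List.
From mathcomp Require Import all_boot.

Set Implicit Arguments.
Unset Strict Implicit.
Unset Printing Implicit Defensive.

Section Generic.
Variable T : Type.

Inductive sigma_gen (D : T -> Prop) (G : (T -> Prop) -> Prop) :
    (T -> Prop) -> Prop :=
| sg_base A : G A -> sigma_gen D G (fun x => A x /\ D x)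
| sg_empty : sigma_gen D G (fun _ => False)
| sg_compl A : sigma_gen D G A -> sigma_gen D G (fun x => D x /\ ~ A x)
| sg_union (F : nat -> T -> Prop) :
    (forall n, sigma_gen D G (F n)) -> sigma_gen D G (fun x => exists n, F n x).

Definition open_in (D : T -> Prop) (B : (T -> Prop) -> Prop) (U : T -> Prop) :=
  (forall x, U x -> D x) /\
  (forall x, U x -> exists b, B b /\ b x /\ forall y, b y -> D y -> U y).

Definition borel (D : T -> Prop) (B : (T -> Prop) -> Prop) : (T -> Prop) -> Prop :=
  sigma_gen D (open_in D B).

Definition countable_set (S : T -> Prop) :=
  exists f : T -> nat, forall x y, S x -> S y -> f x = f y -> x = y.
End Generic.

Definition baire_basis : ((nat -> nat) -> Prop) -> Prop :=
  fun S => exists s : seq nat,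
    S = fun y => forall i, i < size s -> y i = nth 0 s i.

Definition baire_prod_basis T (B : (T -> Prop) -> Prop) :
    ((T * (nat -> nat)) -> Prop) -> Prop :=
  fun S => exists b c, B b /\ baire_basis c /\ S = fun z => b z.1 /\ c z.2.

Definition sigma11 T (D : T -> Prop) (B : (T -> Prop) -> Prop) (A : T -> Prop) :=
  exists P, borel (fun z : T * (nat -> nat) => D z.1) (baire_prod_basis B) P /\
            forall x, A x <-> exists y, P (x, y).

Record lang := Lang {
  fsym : countType;  (* function (and constant = 0-ary) symbols *)
  rsym : countType;
  farity : fsym -> nat;
  rarity : rsym -> nat }.

Section Logic.
Variable L : lang.

Record structure (T : Type) := Struc {
  fint : forall f : fsym L, ('I_(farity f) -> T) -> T;
  rint : forall r : rsym L, ('I_(rarity r) -> T) -> Prop }.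

Inductive term :=
| Var of nat
| App (f : fsym L) of ('I_(farity f) -> term).

Inductive atom :=
| AEq of term & term
| ARel (r : rsym L) of ('I_(rarity r) -> term).

Inductive lit :=
| LPos of atom
| LNeg of atom.

(* finitary quantifier-free formulas (for the topology of Mod(L)) *)
Inductive qf :=
| QAtom of atom
| QNeg of qf
| QAnd of qf & qf
| QOr of qf & qf.

Inductive form :=
| FAtom of atom
| FNeg of form
| FConj of (nat -> form)
| FDisj of (nat -> form)
| FEx of nat & form
| FAll of nat & form.

Fixpoint tvars_lt (n : nat) (t : term) : Prop :=
  match t with
  | Var k => k < n
  | App f ts => forall i, tvars_lt n (ts i)
  end.

Fixpoint tmentions (k : nat) (t : term) : Prop :=
  match t with
  | Var j => j = k
  | App f ts => exists i, tmentions k (ts i)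
  end.

Definition avars_lt n (a : atom) : Prop :=
  match a with
  | AEq t1 t2 => tvars_lt n t1 /\ tvars_lt n t2
  | ARel r ts => forall i, tvars_lt n (ts i)
  end.

Definition amentions k (a : atom) : Prop :=
  match a with
  | AEq t1 t2 => tmentions k t1 \/ tmentions k t2
  | ARel r ts => exists i, tmentions k (ts i)
  end.

Definition lvars_lt n (l : lit) : Prop :=
  match l with LPos a | LNeg a => avars_lt n a end.

Fixpoint free (k : nat) (phi : form) : Prop :=
  match phi with
  | FAtom a => amentions k a
  | FNeg psi => free k psi
  | FConj fs | FDisj fs => exists i, free k (fs i)
  | FEx n psi | FAll n psi => k <> n /\ free k psi
  end.

Definition sentence (phi : form) := forall k, ~ free k phi.

Section Sat.
Variables (T : Type) (M : structure T).

Fixpoint teval (e : nat -> T) (t : term) : T :=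
  match t with
  | Var n => e n
  | App f ts => fint M (fun i => teval e (ts i))
  end.

Definition asat (e : nat -> T) (a : atom) : Prop :=
  match a with
  | AEq t1 t2 => teval e t1 = teval e t2
  | ARel r ts => rint M (fun i => teval e (ts i))
  end.

Definition lsat e (l : lit) : Prop :=
  match l with LPos a => asat e a | LNeg a => ~ asat e a end.

Fixpoint qsat e (q : qf) : Prop :=
  match q with
  | QAtom a => asat e a
  | QNeg q => ~ qsat e q
  | QAnd q1 q2 => qsat e q1 /\ qsat e q2
  | QOr q1 q2 => qsat e q1 \/ qsat e q2
  end.

Definition upd (e : nat -> T) (n : nat) (x : T) : nat -> T :=
  fun k => if k == n then x else e k.

Fixpoint sat (e : nat -> T) (phi : form) : Prop :=
  match phi with
  | FAtom a => asat e a
  | FNeg psi => ~ sat e psi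
  | FConj fs => forall i, sat e (fs i)
  | FDisj fs => exists i, sat e (fs i)
  | FEx n psi => exists x, sat (upd e n x) psi
  | FAll n psi => forall x, sat (upd e n x) psi
  end.

Definition models (phi : form) := forall e, sat e phi.
End Sat.

(* Mod(L) = structure nat.  Basic open sets {M | M |= q(n_1..n_m)}.   *)
Definition modL_basis : (structure nat -> Prop) -> Prop :=
  fun S => exists (q : qf) (ns : seq nat),
    S = fun M => qsat M (fun i => nth 0 ns i) q.

(* basis of Mod(L) x omega^{<omega} (the latter discrete) *)
Definition mod_seq_basis : ((structure nat * seq nat) -> Prop) -> Prop :=
  fun S => exists b s, modL_basis b /\ S = fun z => b z.1 /\ z.2 = s.

(* a countable (nonempty) L-structure together with a finite tuple    *)
Record pstr := PStr { car : countType; pt : car; st : structure car;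
                      tup : seq car }.

Definition ext (p : pstr) (b : seq (car p)) : pstr :=
  @PStr (car p) (pt p) (st p) (tup p ++ b).

(* phi_0^{a,M}, identified with the set of (negated) atomic formulas in
   the variables x_0..x_{|a|-1} true of a in M *)
Definition diag0 (p : pstr) : lit -> Prop :=
  fun l => lvars_lt (size (tup p)) l /\ lsat (st p) (fun i => nth (pt p) (tup p) i) l.

(* Countable ordinals are coded by a well-order lt on nat; the ordinal
   coded by a : nat is the order type of {x | lt x a}. *)
Section Types.
Variables (lt : nat -> nat -> Prop) (wf : well_founded lt).

Definition succ_of (d g : nat) := lt d g /\ ~ exists e, lt d e /\ lt e g.
Definition is_zero (g : nat) := forall d, ~ lt d g.
Definition is_limit (g : nat) := (exists d, lt d g) /\ ~ exists d, succ_of d g.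

(* tp g p q  <->  phi_g^{p} and phi_g^{q} are syntactically equal.
   Thus the predicate (tp g p) (the class of p) represents the formula
   phi_g^{a,M} where p = (M,a). *)
Definition tp_F (g : nat) (rec : forall d, lt d g -> pstr -> pstr -> Prop)
    (p q : pstr) : Prop :=
  diag0 p = diag0 q /\
  forall d (h : lt d g),
    rec d h p = rec d h q /\
    (succ_of d g ->
       (fun X => exists b : seq (car p), X = rec d h (@ext p b)) =
       (fun X => exists c : seq (car q), X = rec d h (@ext q c))).

Definition tp : nat -> pstr -> pstr -> Prop :=
  Fix wf (fun _ => pstr -> pstr -> Prop) tp_F.

(* formulas of level g are represented as (g, class) *)
Definition K := (nat * (pstr -> Prop))%type.
(* ambient index type: atomic/negated atomic formulas, or higher formulas *)
Definition Idx := (lit + K)%type.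

(* phi_a^{p} under the paper's identification with an element of X_a *)
Definition typ (a : nat) (p : pstr) : Idx -> Prop := fun i =>
  (is_zero a /\ exists l, i = inl l /\ diag0 p l) \/
  (exists d, succ_of d a /\ exists b : seq (car p), i = inr (d, tp d (@ext p b))) \/
  (is_limit a /\ exists d, lt d a /\ i = inr (d, tp d p)).

Variable phi : form.

Definition pmodel (p : pstr) := models (st p) phi.

Definition Psi (g : nat) : K -> Prop :=
  fun k => exists p, pmodel p /\ k = (g, tp g p).

Definition Xidx (a : nat) : Idx -> Prop := fun i =>
  (is_zero a /\ exists l, i = inl l) \/
  (exists d, succ_of d a /\ exists k, i = inr k /\ Psi d k) \/
  (is_limit a /\ exists d k, lt d a /\ Psi d k /\ i = inr k).

(* X_a = 2^{Xidx a}, as subsets of Xidx a, with the product topology *)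
Definition Xdom (a : nat) : (Idx -> Prop) -> Prop :=
  fun S => forall i, S i -> Xidx a i.

Definition Xbasis (a : nat) : ((Idx -> Prop) -> Prop) -> Prop :=
  fun U => exists pos neg : seq Idx,
    (forall i, List.In i pos -> Xidx a i) /\ (forall i, List.In i neg -> Xidx a i) /\
    U = fun S => (forall i, List.In i pos -> S i) /\ (forall i, List.In i neg -> ~ S i).

Definition PsiX (a : nat) : (Idx -> Prop) -> Prop :=
  fun S => exists p, pmodel p /\ S = typ a p.
Definition PhiX (a : nat) : (Idx -> Prop) -> Prop :=
  fun S => exists p, pmodel p /\ tup p = [::] /\ S = typ a p.

Definition ModSeq : (structure nat * seq nat) -> Prop :=
  fun z => models z.1 phi.

Definition tpmap (a : nat) (z : structure nat * seq nat) : Idx -> Prop :=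
  typ a (@PStr nat 0 z.1 z.2).
End Types.
End Logic.

From Pilot Require Import Defs.
From mathcomp Require Import all_boot boolp.
From mathcomp Require classical_sets functions cardinality.

Set Implicit Arguments.
Unset Strict Implicit.
Unset Printing Implicit Defensive.

(* By well-founded induction on the level g, "phi_g^{ab,M} is a given type"
   is a countable Boolean combination of the same statements at lower levels
   (the back-and-forth clauses quantify over the countable set of tuples b)
   and of atomic diagrams, which are clopen in Mod(L).  So every coordinate of
   (M, a) |-> phi_alpha^{a,M} is Borel, and since X_alpha is a product of
   countably many copies of 2, the map itself is Borel.  For (2), a point y of
   Baire space codes a structure on nat or on a finite ordinal together with a
   tuple; "S is phi_alpha of the pointed model coded by y" is Borel in (S, y),
   and every countable pointed model is isomorphic to a coded one, so Psi_alpha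
   and Phi_alpha are projections of Borel sets. *)

Section Measurable.
Variables (T : Type) (D : T -> Prop) (G : (T -> Prop) -> Prop).

Definition measurable (X : T -> Prop) := sigma_gen D G (fun x => D x /\ X x).

Lemma sigma_gen_measurable A X :
  sigma_gen D G A -> (forall x, A x <-> D x /\ X x) -> measurable X.
Proof. by move=> GA /predeqP AX; rewrite /measurable -AX. Qed.

Lemma measurable_ext X Y :
  (forall x, D x -> (X x <-> Y x)) -> measurable X -> measurable Y.
Proof.
move=> XY mX; apply: sigma_gen_measurable mX _ => x.
by split=> -[Dx ?]; split=> //; apply/(XY x Dx).
Qed.

Lemma measurable_gen A : G A -> measurable A.
Proof. by move=> GA; apply: sigma_gen_measurable (sg_base D GA) _ => x; split=> -[]. Qed.

Lemma measurable0 : measurable (fun _ => False).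
Proof. by apply: sigma_gen_measurable (sg_empty D G) _ => x; split=> -[]. Qed.

Lemma measurableC X : measurable X -> measurable (fun x => ~ X x).
Proof. by move=> mX; apply: sigma_gen_measurable (sg_compl mX) _ => x; tauto. Qed.

Lemma measurableT : measurable (fun _ => True).
Proof. by apply: measurable_ext (measurableC measurable0) => x _; tauto. Qed.

Lemma bigcup_measurable (F : nat -> T -> Prop) :
  (forall n, measurable (F n)) -> measurable (fun x => exists n, F n x).
Proof.
move=> mF; apply: sigma_gen_measurable (sg_union mF) _ => x.
by split=> [[n [Dx Fx]]|[Dx [n Fx]]]; [split=> //; exists n | exists n].
Qed.

Lemma bigcap_measurable (F : nat -> T -> Prop) :
  (forall n, measurable (F n)) -> measurable (fun x => forall n, F n x).
Proof.
move=> mF; apply: measurable_ext (measurableC (bigcup_measurable (fun n => measurableC (mF n)))).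
by move=> x _; split=> [nF n|Fx [n]//]; apply: contrapT => Fn; apply: nF; exists n.
Qed.

Lemma measurable_cst (P : Prop) : measurable (fun _ => P).
Proof.
by have [p|np] := EM P; [apply: measurable_ext measurableT | apply: measurable_ext measurable0];
  move=> x _; tauto.
Qed.

Lemma measurableU X Y :
  measurable X -> measurable Y -> measurable (fun x => X x \/ Y x).
Proof.
move=> mX mY; pose F n := if n is 0 then X else Y.
apply: measurable_ext (bigcup_measurable (F := F) _); last by case.
by move=> x _; split=> [[[|n] ?]|[?|?]]; [left|right|exists 0|exists 1].
Qed.

Lemma measurableI X Y :
  measurable X -> measurable Y -> measurable (fun x => X x /\ Y x).
Proof.
move=> mX mY; apply: measurable_ext (measurableC (measurableU (measurableC mX) (measurableC mY))).
move=> x _; split=> [nXY|[Xx Yx] []//].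
by split; apply: contrapT => N; apply: nXY; [left|right].
Qed.

Lemma measurable_imply (P : Prop) X :
  (P -> measurable X) -> measurable (fun x => P -> X x).
Proof.
have [p mX|np _] := EM P; first by apply: measurable_ext (mX p) => x _; split=> // /(_ p).
by apply: measurable_ext measurableT => x _; tauto.
Qed.

Lemma measurable_iff X Y :
  measurable X -> measurable Y -> measurable (fun x => X x <-> Y x).
Proof.
move=> mX mY; apply: measurable_ext
  (measurableU (measurableI mX mY) (measurableI (measurableC mX) (measurableC mY))).
move=> x _; split=> [[[]|[]]|XY]; try tauto.
by have [Xx|nXx] := EM (X x); [left|right]; tauto.
Qed.

Lemma measurable_exists (I : countType) (F : I -> T -> Prop) :
  (forall i, measurable (F i)) -> measurable (fun x => exists i, F i x).
Proof.
move=> mF; pose F' n x := if @unpickle I n is Some i then F i x else False.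
apply: measurable_ext (bigcup_measurable (F := F') _); last first.
  by move=> n; rewrite /F'; case: unpickle => [i|]; [exact: mF | exact: measurable0].
move=> x _; rewrite /F'; split=> [[n]|[i Fi]]; first by case: unpickle => // i; exists i.
by exists (pickle i); rewrite pickleK.
Qed.

Lemma measurable_forall (I : countType) (F : I -> T -> Prop) :
  (forall i, measurable (F i)) -> measurable (fun x => forall i, F i x).
Proof.
move=> mF; apply: measurable_ext (measurableC (measurable_exists (fun i => measurableC (mF i)))).
by move=> x _; split=> [nF i|Fx [i]//]; apply: contrapT => Fi; apply: nF; exists i.
Qed.

Lemma measurable_forall_seq (I : Type) (s : seq I) (F : I -> T -> Prop) :
  (forall i, List.In i s -> measurable (F i)) ->
  measurable (fun x => forall i, List.In i s -> F i x).
Proof.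
elim: s => [|i s IH] mF; first by apply: measurable_ext measurableT => x _; split=> // _ i [].
apply: measurable_ext (measurableI (mF i (or_introl erefl)) (IH (fun j h => mF j (or_intror h)))).
by move=> x _; split=> [[Fi Fs] j [<-|/Fs]|Fx]//; split=> [|j h]; apply: Fx; [left|right].
Qed.
End Measurable.

Lemma basis_measurable T (D : T -> Prop) (B : (T -> Prop) -> Prop) b :
  B b -> measurable D (open_in D B) b.
Proof.
move=> Bb; have open_b : open_in D B (fun x => b x /\ D x).
  by split=> [x []//|x [bx Dx]]; exists b; split=> //; split=> // y.
by apply: measurable_ext (measurable_gen D open_b) => x Dx; tauto.
Qed.

Lemma borel_preimage_measurable T V (DT : T -> Prop) GT (DV : V -> Prop) BV (f : T -> V) :
  (forall x, DT x -> DV (f x)) ->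
  (forall U, open_in DV BV U -> measurable DT GT (fun x => U (f x))) ->
  forall B, borel DV BV B -> measurable DT GT (fun x => B (f x)).
Proof.
move=> fD fU B; elim=> {B} [U /fU|||F _].
- by apply: measurable_ext => x /fD; split=> [|[]//]; split.
- exact: measurable0.
- by move=> A _ /measurableC; apply: measurable_ext => x /fD; split=> [|[]//]; split.
- exact: bigcup_measurable.
Qed.

Section Enumerable.
Variable T : Type.

Definition enumerable (S : T -> Prop) := exists e : nat -> option T,
  (forall n x, e n = Some x -> S x) /\ forall x, S x -> exists n, e n = Some x.

Lemma countable_set_enumerable S : countable_set S -> enumerable S.
Proof.
move=> [f f_inj].
pose e n := if pselect (exists x, S x /\ f x = n) is left ex then Some (sval (cid ex)) else None.
exists e; split=> [n x|x Sx]; rewrite /e.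
  by case: pselect => // ex [<-]; case: cid => y [].
exists (f x); case: pselect => [ex|[]]; last by exists x.
by case: cid => y [Sy fy]; congr Some; apply: f_inj.
Qed.

Lemma enumerable_sub S S' : enumerable S -> (forall x, S' x -> S x) -> enumerable S'.
Proof.
move=> [e [e_sound e_onto]] S'S.
exists (fun n => if e n is Some x then if pselect (S' x) then Some x else None else None).
split=> [n x|x S'x]; first by case: (e n) => // y; case: pselect => // S'y [<-].
by have [n en] := e_onto x (S'S x S'x); exists n; rewrite en; case: pselect.
Qed.

Lemma enumerable_bigcup (S : nat -> T -> Prop) :
  (forall d, enumerable (S d)) -> enumerable (fun x => exists d, S d x).
Proof.
move=> /choice [e e_enum].
exists (fun n => if @unpickle (nat * nat)%type n is Some (d, m) then e d m else None).
split=> [n x|x [d Sx]].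
  by case: unpickle => // -[d m] edm; exists d; apply: (proj1 (e_enum d)) edm.
by have [m edm] := (proj2 (e_enum d)) x Sx; exists (pickle (d, m)); rewrite pickleK.
Qed.

Lemma enumerableU S S' : enumerable S -> enumerable S' -> enumerable (fun x => S x \/ S' x).
Proof.
move=> eS eS'.
have eU : enumerable (fun x => exists d, (if d is 0 then S else S') x).
  by apply: enumerable_bigcup; case.
by apply: enumerable_sub eU _ => x [Sx|S'x]; [exists 0 | exists 1].
Qed.

Lemma measurable_forall_in W (DW : W -> Prop) GW (S : T -> Prop) (F : T -> W -> Prop) :
  enumerable S -> (forall x, S x -> measurable DW GW (F x)) ->
  measurable DW GW (fun w => forall x, S x -> F x w).
Proof.
move=> [e [e_sound e_onto]] mF.
pose F' n w := if e n is Some x then F x w else True.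
apply: measurable_ext (measurable_forall (I := nat) (F := F') _); last first.
  move=> n; rewrite /F'; case E: (e n) => [x|]; last exact: measurableT.
  exact/mF/(e_sound n).
move=> w _; rewrite /F'; split=> [Fw x Sx|Fw n].
  by have [n en] := e_onto x Sx; move: (Fw n); rewrite en.
by case E: (e n) => // [x]; apply/Fw/(e_sound n).
Qed.
End Enumerable.

Lemma enumerable_image T U (f : T -> U) (S : T -> Prop) :
  enumerable S -> enumerable (fun y => exists2 x, S x & y = f x).
Proof.
move=> [e [e_sound e_onto]]; exists (fun n => omap f (e n)).
split=> [n y|_ [x Sx ->]].
  by case E: (e n) => [x|] //= [<-]; exists x => //; apply: e_sound E.
by have [n en] := e_onto x Sx; exists n; rewrite en.
Qed.

Section CountableBijection.
Import classical_sets functions cardinality.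
Local Open Scope classical_set_scope.
Local Open Scope card_scope.

Lemma setT_card_eq_bijective (T U : Type) :
  [set: T] #= [set: U] -> exists f : T -> U, bijective f.
Proof.
have toTK V (y : [set: V]) : to_setT (val y) = y by exact: val_inj.
move=> /card_bijP [g [g' gK Kg]].
exists (fun x => val (g (to_setT x))), (fun y => val (g' (to_setT y))).
  by move=> x; rewrite toTK gK.
by move=> y; rewrite toTK Kg.
Qed.

Lemma countType_bijective (T : countType) :
  (exists f : T -> nat, bijective f) \/ exists n (f : T -> 'I_n), bijective f.
Proof.
have [[n Tn]|T_inf] := pselect (finite_set [set: T]).
  by right; exists n; apply: setT_card_eq_bijective; apply: card_eq_trans Tn card_II.
left; apply: setT_card_eq_bijective; apply: Cantor_Bernstein; first exact: countableP.
exact/infiniteP.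
Qed.
End CountableBijection.

Section CantorSpace.
Variables (I : Type) (Ix : I -> Prop).

Definition cantor_dom (S : I -> Prop) := forall i, S i -> Ix i.

Definition cantor_basis : ((I -> Prop) -> Prop) -> Prop :=
  fun U => exists pos neg : seq I,
    (forall i, List.In i pos -> Ix i) /\ (forall i, List.In i neg -> Ix i) /\
    U = fun S => (forall i, List.In i pos -> S i) /\ (forall i, List.In i neg -> ~ S i).

Hypothesis Ix_enumerable : enumerable Ix.

Lemma cantor_open_preimage W (DW : W -> Prop) GW (f : W -> I -> Prop) :
  (forall w, DW w -> cantor_dom (f w)) ->
  (forall i, Ix i -> measurable DW GW (fun w => f w i)) ->
  forall U, open_in cantor_dom cantor_basis U -> measurable DW GW (fun w => U (f w)).
Proof.
move=> f_dom f_meas U [_ U_open].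
have [e [e_sound e_onto]] := Ix_enumerable.
have In_pmap ns i : List.In i (pmap e ns) -> Ix i.
  elim: ns => //= n ns IH; case E: (e n) => [j|] //= [<-|/IH//]; exact: e_sound E.
have pmap_onto s : (forall i, List.In i s -> Ix i) -> exists ns, pmap e ns = s.
  elim: s => [|i s IH] sI; first by exists [::].
  have [n en] := e_onto i (sI i (or_introl erefl)).
  have [ns <-] := IH (fun j h => sI j (or_intror h)).
  by exists (n :: ns); rewrite /= en.
(* Through the enumeration e, basic open sets are indexed by the countable
   type of pairs of lists of codes. *)
pose basic (ns : seq nat * seq nat) (S : I -> Prop) :=
  (forall i, List.In i (pmap e ns.1) -> S i) /\ (forall i, List.In i (pmap e ns.2) -> ~ S i).
apply: (@measurable_ext _ _ _
  (fun w => exists ns, (forall S, basic ns S -> cantor_dom S -> U S) /\ basic ns (f w))).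
  move=> w Dw; split=> [[ns [sub b]]|Ufw]; first exact: sub b (f_dom w Dw).
  have [b [[pos [neg [posI [negI ->]]]] [bfw bU]]] := U_open _ Ufw.
  have [ns1 e1] := pmap_onto pos posI; have [ns2 e2] := pmap_onto neg negI.
  by exists (ns1, ns2); rewrite /basic /= e1 e2; split=> [S|]; [exact: bU | exact: bfw].
apply: measurable_exists => ns; apply: measurableI; first exact: measurable_cst.
apply: measurableI; apply: measurable_forall_seq => i /In_pmap Ixi; last apply: measurableC;
  exact: f_meas.
Qed.

Lemma cantor_borel_preimage W (DW : W -> Prop) GW (f : W -> I -> Prop) :
  (forall w, DW w -> cantor_dom (f w)) ->
  (forall i, Ix i -> measurable DW GW (fun w => f w i)) ->
  forall B, borel cantor_dom cantor_basis B -> measurable DW GW (fun w => B (f w)).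
Proof.
move=> f_dom f_meas; apply: (borel_preimage_measurable f_dom).
exact: cantor_open_preimage f_dom f_meas.
Qed.
End CantorSpace.

Definition agree N (y y' : nat -> nat) := forall i, i < N -> y' i = y i.

Definition locally_constant X (F : (nat -> nat) -> X) :=
  forall y, exists N, forall y', agree N y y' -> F y' = F y.

Lemma agree_le M N y y' : M <= N -> agree N y y' -> agree M y y'.
Proof. by move=> MN yy' i iM; apply: yy'; apply: leq_trans MN. Qed.

Lemma locally_constant_cst X (x : X) : locally_constant (fun _ => x).
Proof. by move=> y; exists 0. Qed.

Lemma locally_constant_comp X Y (f : X -> Y) A :
  locally_constant A -> locally_constant (fun y => f (A y)).
Proof. by move=> cA y; have [N AN] := cA y; exists N => y' /AN ->. Qed.

Lemma locally_constant2 X Y Z (f : X -> Y -> Z) A B :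
  locally_constant A -> locally_constant B -> locally_constant (fun y => f (A y) (B y)).
Proof.
move=> cA cB y; have [N AN] := cA y; have [M BM] := cB y.
exists (maxn N M) => y' yy'.
by rewrite AN ?BM //; apply: agree_le yy'; rewrite ?leq_maxl ?leq_maxr.
Qed.

Lemma locally_constant_fun X n (A : 'I_n -> (nat -> nat) -> X) :
  (forall i, locally_constant (A i)) -> locally_constant (fun y i => A i y).
Proof.
move=> cA y; have /choice [N AN] := fun i => cA i y.
exists (\max_i N i) => y' yy'; apply: funext => i; apply: AN.
by apply: agree_le yy'; apply: leq_bigmax.
Qed.

Lemma locally_constant_apply (K : (nat -> nat) -> nat) :
  locally_constant K -> locally_constant (fun y => y (K y)).
Proof.
move=> cK y; have [N KN] := cK y; exists (maxn N (K y).+1) => y' yy'.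
by rewrite KN ?yy' ?leq_maxr //; apply: agree_le yy'; rewrite leq_maxl.
Qed.

Lemma locally_constant_coord k : locally_constant (fun y => y k).
Proof. exact: locally_constant_apply (locally_constant_cst k). Qed.

Section Decoding.
Variables (L : lang) (C : countType) (c0 : C).

(* A point y of Baire space codes a structure on C and a tuple: y 0 codes the
   tuple, and the value of f (the truth of r) at args is coded at the positive
   index fun_key args (rel_key args). *)
Definition fun_key (f : Defs.fsym L) (args : 'I_(farity f) -> C) : nat :=
  (pickle ((true, (pickle f, [seq args i | i <- enum 'I_(farity f)]))
           : bool * (nat * seq C))).+1.

Definition rel_key (r : Defs.rsym L) (args : 'I_(rarity r) -> C) : nat :=
  (pickle ((false, (pickle r, [seq args i | i <- enum 'I_(rarity r)]))
           : bool * (nat * seq C))).+1.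

Definition decode_structure (y : nat -> nat) : structure L C :=
  Struc (fun f args => odflt c0 (unpickle (y (fun_key args))))
        (fun r args => y (rel_key args) = 0).

Definition decode_tuple (y : nat -> nat) : seq C := odflt [::] (unpickle (y 0)).

Definition decode_pstr (y : nat -> nat) : pstr L :=
  PStr c0 (decode_structure y) (decode_tuple y).

Lemma decode_onto (M : structure L C) (s : seq C) :
  exists y, decode_structure y = M /\ decode_tuple y = s.
Proof.
case: M => fi ri.
pose entry (key : bool * (nat * seq C)) : nat :=
  let: (is_fun, (sym, args)) := key in
  if is_fun then
    if @unpickle (Defs.fsym L) sym is Some f then pickle (fi f (fun i => nth c0 args i)) else 0
  else if @unpickle (Defs.rsym L) sym is Some r then
    (if pselect (ri r (fun i => nth c0 args i)) then 0 else 1) else 0.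
pose y n := if n is n'.+1 then odflt 0 (omap entry (unpickle n')) else pickle s.
exists y; split; last by rewrite /decode_tuple /y pickleK.
have nth_enum n (args : 'I_n -> C) :
    (fun i : 'I_n => nth c0 [seq args j | j <- enum 'I_n] i) = args.
  by apply: funext => i; rewrite (nth_map i) ?size_enum_ord // nth_ord_enum.
congr Struc; apply: functional_extensionality_dep => sym; apply: funext => args.
  by rewrite /fun_key /y pickleK /= pickleK nth_enum pickleK.
by rewrite /rel_key /y pickleK /= pickleK nth_enum; apply/propext; case: pselect.
Qed.

Lemma locally_constant_decode_tuple : locally_constant decode_tuple.
Proof.
exact: (locally_constant_comp (fun v => odflt [::] (unpickle v)) (locally_constant_coord 0)).
Qed.

Lemma locally_constant_teval (E : (nat -> nat) -> nat -> C) :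
  (forall k, locally_constant (fun y => E y k)) ->
  forall t, locally_constant (fun y => teval (decode_structure y) (E y) t).
Proof.
move=> cE; elim=> [k|f ts IH] /=; first exact: cE.
apply: (locally_constant_comp (fun v => odflt c0 (unpickle v))); apply: locally_constant_apply.
exact: (locally_constant_comp (@fun_key f) (locally_constant_fun IH)).
Qed.

Lemma locally_constant_asat (E : (nat -> nat) -> nat -> C) :
  (forall k, locally_constant (fun y => E y k)) ->
  forall a, locally_constant (fun y => asat (decode_structure y) (E y) a).
Proof.
move=> cE [t1 t2|r ts] /=.
  by apply: locally_constant2; apply: locally_constant_teval.
apply: (locally_constant_comp (eq^~ 0)); apply: locally_constant_apply.
apply: (locally_constant_comp (@rel_key r)); apply: locally_constant_fun => i.
exact: locally_constant_teval.
Qed.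

Lemma locally_constant_diag0 b l :
  locally_constant (fun y => diag0 (PStr c0 (decode_structure y) (decode_tuple y ++ b)) l).
Proof.
have c_nth k : locally_constant (fun y => nth c0 (decode_tuple y ++ b) k).
  exact: (locally_constant_comp (fun s => nth c0 (s ++ b) k) locally_constant_decode_tuple).
apply: (locally_constant2 and).
  exact: (locally_constant_comp (fun s => lvars_lt (size (s ++ b)) l)
                                locally_constant_decode_tuple).
case: l => a /=; last apply: (locally_constant_comp not); exact: locally_constant_asat.
Qed.
End Decoding.

Section BaireProduct.
Variables (V : Type) (DV : V -> Prop) (BV : (V -> Prop) -> Prop) (top : V -> Prop).
Hypotheses (BV_top : BV top) (DV_top : forall v, DV v -> top v).
Local Notation D := (fun z : V * (nat -> nat) => DV z.1).
Local Notation G := (open_in D (baire_prod_basis BV)).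

Let prefix (s : seq nat) (y : nat -> nat) := forall i, i < size s -> y i = nth 0 s i.

Let measurable_basic b s : BV b -> measurable D G (fun w => b w.1 /\ prefix s w.2).
Proof.
by move=> Bb; apply: basis_measurable; exists b, (prefix s); split=> //; split=> //; exists s.
Qed.

Lemma measurable_fst b : BV b -> measurable D G (fun w => b w.1).
Proof. by move=> /(measurable_basic [::]); apply: measurable_ext => w _; split=> [[]|]. Qed.

Lemma locally_constant_measurable (Q : (nat -> nat) -> Prop) :
  locally_constant Q -> measurable D G (fun w => Q w.2).
Proof.
move=> cQ; have prefix_meas s : measurable D G (fun w => prefix s w.2).
  by apply: measurable_ext (measurable_basic s BV_top) => w /DV_top; split=> [[]|].
have : measurable D G (fun w => exists s, (forall y, prefix s y -> Q y) /\ prefix s w.2).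
  apply: measurable_exists => s; apply: measurableI; first exact: measurable_cst.
  exact: prefix_meas.
apply: measurable_ext => w _; split=> [[s [sQ /sQ //]]|Qw].
have [N QN] := cQ w.2; exists (mkseq w.2 N); split=> [y pre_y|i]; last first.
  by rewrite size_mkseq => iN; rewrite nth_mkseq.
by rewrite QN // => i iN; rewrite pre_y ?size_mkseq // nth_mkseq.
Qed.

Lemma sat_decode_measurable L (C : countType) (c0 : C) (psi : form L) (e : nat -> C) :
  measurable D G (fun w => sat (decode_structure L c0 w.2) e psi).
Proof.
elim: psi e => [a|psi IH|fs IH|fs IH|n psi IH|n psi IH] e /=.
- apply: (locally_constant_measurable (Q := fun y => asat (decode_structure L c0 y) e a)).
  exact: (@locally_constant_asat L C c0 (fun _ => e) (fun k => locally_constant_cst (e k)) a).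
- exact: measurableC.
- by apply: bigcap_measurable => i; apply: IH.
- by apply: bigcup_measurable => i; apply: IH.
- by apply: measurable_exists => x; apply: IH.
- by apply: measurable_forall => x; apply: IH.
Qed.
End BaireProduct.

Section Coincidence.
Variables (L : lang) (T : Type) (M : structure L T).

Lemma teval_agree (t : term L) e e' :
  (forall k, tmentions k t -> e k = e' k) -> teval M e t = teval M e' t.
Proof.
elim: t => [n|f ts IH] /= ee'; first exact: ee'.
by congr fint; apply: funext => i; apply: IH => k ki; apply: ee'; exists i.
Qed.

Lemma upd_agree (P : nat -> Prop) (e e' : nat -> T) n x :
  (forall k, k <> n /\ P k -> e k = e' k) -> forall k, P k -> upd e n x k = upd e' n x k.
Proof. by move=> ee' k Pk; rewrite /upd; case: eqP => // kn; apply: ee'. Qed.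

Lemma sat_agree (psi : form L) e e' :
  (forall k, free k psi -> e k = e' k) -> (sat M e psi <-> sat M e' psi).
Proof.
elim: psi e e' => [[t1 t2|r ts]|psi IH|fs IH|fs IH|n psi IH|n psi IH] e e' ee' /=.
- rewrite /asat (@teval_agree t1 e e') ?(@teval_agree t2 e e') // => k k_t.
    by apply: ee'; right.
  by apply: ee'; left.
- rewrite /asat; suff -> : (fun i => teval M e (ts i)) = (fun i => teval M e' (ts i)) by [].
  by apply: funext => i; apply: teval_agree => k k_t; apply: ee'; exists i.
- by rewrite (IH e e').
- have agree_i i : sat M e (fs i) <-> sat M e' (fs i).
    by apply: IH => k k_i; apply: ee'; exists i.
  by split=> Hs i; apply/agree_i.
- have agree_i i : sat M e (fs i) <-> sat M e' (fs i).
    by apply: IH => k k_i; apply: ee'; exists i.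
  by split=> -[i Hi]; exists i; apply/agree_i.
- by split=> -[x Hx]; exists x; apply/(IH _ _ (upd_agree x ee')).
- by split=> Hx x; apply/(IH _ _ (upd_agree x ee')).
Qed.

Lemma sentence_models (phi : form L) (e0 : nat -> T) :
  sentence phi -> (models M phi <-> sat M e0 phi).
Proof.
move=> phi_s; split=> [|phi_e0 e]; first exact.
by apply/(sat_agree (e' := e0)) => // k /phi_s.
Qed.
End Coincidence.

Section Transport.
Variables (L : lang) (C1 C2 : countType) (h : C1 -> C2) (k : C2 -> C1).
Hypotheses (hK : cancel h k) (kK : cancel k h).

Definition transport (M : structure L C1) : structure L C2 :=
  Struc (fun f args => h (fint M (fun i => k (args i))))
        (fun r args => rint M (fun i => k (args i))).

Variable M : structure L C1.

Lemma teval_transport e t : teval (transport M) (fun n => h (e n)) t = h (teval M e t).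
Proof. by elim: t => [n|f ts IH] //=; congr (h (fint M _)); apply: funext => i; rewrite IH hK. Qed.

Lemma asat_transport e a : asat (transport M) (fun n => h (e n)) a <-> asat M e a.
Proof.
case: a => [t1 t2|r ts]; rewrite /asat /=.
  by rewrite !teval_transport; split=> [/(can_inj hK)|->].
suff -> : (fun i => k (teval (transport M) (fun n => h (e n)) (ts i))) =
          (fun i => teval M e (ts i)) by [].
by apply: funext => i; rewrite teval_transport hK.
Qed.

Lemma sat_transport psi e : sat (transport M) (fun n => h (e n)) psi <-> sat M e psi.
Proof.
have upd_h e' n x : upd (fun m => h (e' m)) n (h x) = (fun m => h (upd e' n x m)).
  by apply: funext => m; rewrite /upd; case: eqP.
elim: psi e => [a|psi IH|fs IH|fs IH|n psi IH|n psi IH] e /=.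
- exact: asat_transport.
- by rewrite IH.
- by split=> Hs i; apply/IH.
- by split=> -[i Hi]; exists i; apply/IH.
- split=> -[x Hx]; first by exists (k x); apply/IH; rewrite -upd_h kK.
  by exists (h x); rewrite upd_h; apply/IH.
- by split=> Hx x; [apply/IH; rewrite -upd_h | rewrite -(kK x) upd_h; apply/IH].
Qed.

Lemma models_transport phi : models M phi -> models (transport M) phi.
Proof.
move=> M_phi e; rewrite (_ : e = fun n => h (k (e n))); first exact/sat_transport.
by apply: funext => n; rewrite kK.
Qed.

Lemma diag0_transport c s :
  diag0 (PStr (h c) (transport M) (map h s)) = diag0 (PStr c M s).
Proof.
apply/predeqP => l; rewrite /diag0 /= size_map.
have -> : (fun i => nth (h c) (map h s) i) = (fun i => h (nth c s i)).
  apply: funext => i; have [lt_i_s|le_s_i] := ltnP i (size s); first exact: nth_map.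
  by rewrite !nth_default ?size_map.
by case: l => a /=; rewrite asat_transport.
Qed.
End Transport.

Section LiteralCode.
Variable L : lang.

Fixpoint term_tree (t : term L) : GenTree.tree nat :=
  match t with
  | Var n => GenTree.Leaf n
  | App f ts => GenTree.Node (pickle f) [seq term_tree (ts i) | i <- enum 'I_(farity f)]
  end.

Lemma map_enum_ord_inj n T (f g : 'I_n -> T) :
  [seq f i | i <- enum 'I_n] = [seq g i | i <- enum 'I_n] -> f = g.
Proof. by move=> /eq_in_map fg; apply: funext => i; apply: fg; rewrite mem_enum. Qed.

Lemma term_tree_inj : injective term_tree.
Proof.
elim=> [n|f ts IH] [m|g us] //=; first by case=> ->.
case=> /(pcan_inj pickleK) fg; subst g => /map_enum_ord_inj tsus.
by congr App; apply: funext => i; apply: IH; apply: (congr1 (@^~ i) tsus).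
Qed.

Definition atom_tree (a : atom L) : GenTree.tree nat :=
  match a with
  | AEq t1 t2 => GenTree.Node 0 [:: term_tree t1; term_tree t2]
  | ARel r ts =>
      GenTree.Node 1 (GenTree.Leaf (pickle r) :: [seq term_tree (ts i) | i <- enum 'I_(rarity r)])
  end.

Lemma atom_tree_inj : injective atom_tree.
Proof.
case=> [t1 t2|r ts] [u1 u2|r' us] //=; first by case=> /term_tree_inj -> /term_tree_inj ->.
case=> /(pcan_inj pickleK) rr'; subst r' => /map_enum_ord_inj tsus.
by congr ARel; apply: funext => i; apply: term_tree_inj; apply: (congr1 (@^~ i) tsus).
Qed.

Definition lit_tree (l : lit L) : GenTree.tree nat :=
  match l with
  | LPos a => GenTree.Node 0 [:: atom_tree a]
  | LNeg a => GenTree.Node 1 [:: atom_tree a]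
  end.

Lemma lit_countable : countable_set (fun _ : lit L => True).
Proof.
exists (fun l => pickle (lit_tree l)) => l l' _ _ /(pcan_inj pickleK).
by case: l l' => a [] b //= [/atom_tree_inj ->].
Qed.
End LiteralCode.

Lemma range_eqP A B T (f : A -> T) (g : B -> T) :
  (fun X => exists a, X = f a) = (fun X => exists b, X = g b) <->
  (forall a, exists b, f a = g b) /\ (forall b, exists a, f a = g b).
Proof.
split=> [/predeqP fg|[fg gf]].
  split=> [a|b]; first by have [b] := (fg (f a)).1 (ex_intro _ a erefl); exists b.
  by have [a] := (fg (g b)).2 (ex_intro _ b erefl); exists a.
apply/predeqP => X; split=> [[a ->]|[b ->]]; first by have [b ->] := fg a; exists b.
by have [a <-] := gf b; exists a.
Qed.

Section Types.
Variables (L : lang) (lt : nat -> nat -> Prop) (wf : well_founded lt).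
Local Notation tp := (@Defs.tp L lt wf).

Lemma tp_fix g (p q : pstr L) : tp g p q <->
  diag0 p = diag0 q /\ forall d, lt d g -> tp d p = tp d q /\
    (succ_of lt d g -> (fun X => exists b, X = tp d (@ext _ p b)) =
                       (fun X => exists c, X = tp d (@ext _ q c))).
Proof.
rewrite /Defs.tp Fix_eq; first by split=> -[eq0 eqd]; split=> // d; apply: eqd.
move=> g' f f' ff'; suff -> : f = f' by [].
by apply: functional_extensionality_dep => d; apply: functional_extensionality_dep.
Qed.

Lemma tp_refl g p : tp g p p.
Proof. exact/tp_fix. Qed.

Lemma tp_sym g p q : tp g p q -> tp g q p.
Proof.
move/tp_fix => [eq0 eqd]; apply/tp_fix; split=> // d dg.
by have [-> e] := eqd d dg; split=> // /e.
Qed.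

Lemma tp_trans g p q r : tp g p q -> tp g q r -> tp g p r.
Proof.
move=> /tp_fix [pq0 pq] /tp_fix [qr0 qr]; apply/tp_fix; split; first by rewrite pq0.
move=> d dg; have [-> pqs] := pq d dg; have [-> qrs] := qr d dg.
by split=> // s; rewrite (pqs s) (qrs s).
Qed.

Lemma tp_eqP g p q : tp g p = tp g q <-> tp g p q.
Proof.
split=> [->|pq]; first exact: tp_refl.
by apply/predeqP => r; split; [apply: tp_trans (tp_sym pq) | apply: tp_trans pq].
Qed.

Lemma tpE g p q : tp g p q <->
  (forall l, diag0 p l <-> diag0 q l) /\ forall d, lt d g -> tp d p q /\
    (succ_of lt d g -> (forall b, exists c, tp d (@ext _ p b) (@ext _ q c)) /\
                       (forall c, exists b, tp d (@ext _ p b) (@ext _ q c))).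
Proof.
have back_forth d b c : tp d (@ext _ p b) = tp d (@ext _ q c) <-> tp d (@ext _ p b) (@ext _ q c).
  exact: tp_eqP.
rewrite tp_fix predeqP; split=> -[eq0 eqd]; split=> // d dg; have [eq e] := eqd d dg.
  split; first exact/tp_eqP.
  by move=> /e /range_eqP [bc cb]; split=> [b|c]; [have [c] := bc b | have [b] := cb c];
    move/back_forth; [exists c | exists b].
split; first exact/tp_eqP.
by move=> /e [bc cb]; apply/range_eqP; split=> [b|c]; [have [c] := bc b | have [b] := cb c];
  move/back_forth; [exists c | exists b].
Qed.

Section TransportTypes.
Variables (C1 C2 : countType) (h : C1 -> C2) (k : C2 -> C1).
Hypotheses (hK : cancel h k) (kK : cancel k h).
Variables (M : structure L C1) (c : C1).
Local Notation pM s := (PStr c M s).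
Local Notation pN s := (PStr (h c) (transport h k M) (map h s)).

Lemma tp_transport d s : tp d (pM s) (pN s).
Proof.
elim/(well_founded_induction wf): d s => d IH s; apply/tpE; split.
  by move=> l; rewrite (diag0_transport hK).
move=> e ed; split=> [|_]; first exact: IH.
split=> b; first by exists (map h b); rewrite /ext /= -map_cat; apply: IH.
exists (map k b); rewrite /ext /= (_ : map h s ++ b = map h (s ++ map k b)); first exact: IH.
by rewrite map_cat mapK.
Qed.

Lemma typ_transport a s : typ wf a (pM s) = typ wf a (pN s).
Proof.
have tp_ext d b : tp d (@ext _ (pM s) b) = tp d (@ext _ (pN s) (map h b)).
  by apply/tp_eqP; rewrite /ext /= -map_cat; apply: tp_transport.
have tp0 d : tp d (pM s) = tp d (pN s) by apply/tp_eqP; apply: tp_transport.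
apply/predeqP => i; rewrite /typ (diag0_transport hK).
split=> -[|[[d [da [b ->]]]|[la [d [da ->]]]]]; try by left.
- by right; left; exists d; split=> //; exists (map h b); rewrite tp_ext.
- by right; right; split=> //; exists d; rewrite tp0.
- by right; left; exists d; split=> //; exists (map k b); rewrite tp_ext mapK.
- by right; right; split=> //; exists d; rewrite tp0.
Qed.
End TransportTypes.

Variable phi : form L.

Lemma typ_dom a p : pmodel phi p -> Xdom wf phi a (typ wf a p).
Proof.
move=> Mp i [[a0 [l [-> _]]]|[[d [da [b ->]]]|[la [d [da ->]]]]].
- by left; split=> //; exists l.
- right; left; exists d; split=> //; exists (d, tp d (@ext _ p b)).
  by split=> //; exists (@ext _ p b).
- by right; right; split=> //; exists d, (d, tp d p); do 2!split=> //; exists p.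
Qed.

Lemma Xidx_enumerable a :
  (forall g, lt g a -> countable_set (Psi wf phi g)) -> enumerable (Xidx wf phi a).
Proof.
move=> Psi_countable.
have Psi_below d : enumerable (fun K => lt d a /\ Psi wf phi d K).
  apply: countable_set_enumerable; have [da|nda] := EM (lt d a).
    by have [f f_inj] := Psi_countable d da; exists f => x y [_ Px] [_ Py]; apply: f_inj.
  by exists (fun _ => 0) => x y [].
apply: (enumerable_sub (enumerableU
  (enumerable_image inl (countable_set_enumerable (lit_countable L)))
  (enumerable_bigcup (fun d => enumerable_image inr (Psi_below d))))).
move=> _ [[_ [l ->]]|[[d [[da _] [K [-> PK]]]]|[_ [d [K [da [PK ->]]]]]]].
- by left; exists l.
- by right; exists d; exists K.
- by right; exists d; exists K.
Qed.
End Types.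

Section TypesMeasurable.
Variables (L : lang) (lt : nat -> nat -> Prop) (wf : well_founded lt).
Variables (W : Type) (D : W -> Prop) (G : (W -> Prop) -> Prop).
Variables (C : countType) (c0 : C) (M : W -> structure L C) (s : W -> seq C).
Local Notation pstr_at w b := (PStr c0 (M w) (s w ++ b)).
Hypothesis diag0_measurable : forall b l, measurable D G (fun w => diag0 (pstr_at w b) l).

Lemma tp_measurable d (q : pstr L) b : measurable D G (fun w => tp wf d (pstr_at w b) q).
Proof.
elim/(well_founded_induction wf): d q b => d IH q b.
have diag0_eq : measurable D G (fun w => forall l, True -> (diag0 (pstr_at w b) l <-> diag0 q l)).
  apply: (measurable_forall_in (countable_set_enumerable (lit_countable L))) => l _.
  exact: measurable_iff (diag0_measurable b l) (measurable_cst _ _ _).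
(* The clauses at lower levels quantify only over the countable type seq C. *)
have below : measurable D G (fun w => forall e, lt e d -> tp wf e (pstr_at w b) q /\
    (succ_of lt e d -> (forall b', exists c, tp wf e (pstr_at w (b ++ b')) (@ext _ q c)) /\
                       (forall c, exists b', tp wf e (pstr_at w (b ++ b')) (@ext _ q c)))).
  apply: measurable_forall => e; apply: measurable_imply => ed.
  apply: measurableI; first exact: IH.
  apply: measurable_imply => _; apply: measurableI.
  - by apply: measurable_forall => b'; apply: measurable_exists => c; apply: IH.
  - by apply: measurable_forall => c; apply: measurable_exists => b'; apply: IH.
apply: measurable_ext (measurableI diag0_eq below) => w _.
have ext_at b' : @ext _ (pstr_at w b) b' = pstr_at w (b ++ b') by rewrite /ext /= catA.
rewrite tpE; setoid_rewrite ext_at.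
by split=> -[eq0 eqd]; split=> // l; apply: eq0.
Qed.

Lemma typ_measurable a i : measurable D G (fun w => typ wf a (PStr c0 (M w) (s w)) i).
Proof.
have at_nil w : PStr c0 (M w) (s w) = pstr_at w [::] by rewrite cats0.
case: i => [l|[d K]].
  apply: measurable_ext (measurableI (measurable_cst D G (is_zero lt a)) (diag0_measurable [::] l)).
  move=> w _; rewrite /typ at_nil; split=> [[a0 l_w]|]; first by left; split=> //; exists l.
  by case=> [[a0 [_ [[<-] l_w]]]|[[d [_ [b //]]]|[_ [d [_ //]]]]].
have K_tp b : measurable D G (fun w => K = tp wf d (pstr_at w b)).
  (* A coordinate that is a type at all is the class of some fixed q. *)
  have [[q ->]|no_q] := EM (exists q, K = tp wf d q).
    by apply: measurable_ext (tp_measurable d q b) => w _; rewrite tp_eqP; split=> /tp_sym.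
  apply: measurable_ext (measurable0 D G) => w _; split=> // Kw.
  by apply: no_q; exists (pstr_at w b).
apply: measurable_ext (measurableU
  (measurableI (measurable_cst D G (succ_of lt d a)) (measurable_exists K_tp))
  (measurableI (measurable_cst D G (is_limit lt a /\ lt d a)) (K_tp [::]))) => w _.
split=> [[[da [b ->]]|[[la da] ->]]|]; [right; left | right; right | ].
- by exists d; split=> //; exists b.
- by split=> //; exists d; split=> //; rewrite at_nil.
case=> [[_ [l []//]]|[[d' [da [b [e1 e2]]]]|[la [d' [da [e1 e2]]]]]]; subst.
  by left; split=> //; exists b.
by right; split=> //; rewrite at_nil.
Qed.
End TypesMeasurable.

Definition lit_qf L (l : lit L) : qf L :=
  match l with LPos a => QAtom a | LNeg a => QNeg (QAtom a) end.

Lemma lsat_qf L T (M : structure L T) e l : lsat M e l <-> qsat M e (lit_qf l).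
Proof. by case: l. Qed.

Section ModelsWithTuples.
Variables (L : lang) (phi : form L).
Local Notation D := (ModSeq phi).
Local Notation G := (open_in D (@mod_seq_basis L)).

Lemma diag0_mod_seq_measurable b l :
  measurable D G (fun z => diag0 (PStr 0 z.1 (z.2 ++ b)) l).
Proof.
have : measurable D G (fun z => exists s : seq nat, lvars_lt (size (s ++ b)) l /\
          qsat z.1 (fun i => nth 0 (s ++ b) i) (lit_qf l) /\ z.2 = s).
  apply: measurable_exists => s; apply: measurableI; first exact: measurable_cst.
  apply: basis_measurable; exists (fun M => qsat M (fun i => nth 0 (s ++ b) i) (lit_qf l)), s.
  by split=> //; exists (lit_qf l), (s ++ b).
apply: measurable_ext => z _; rewrite /diag0 /=.
split=> [[s [ls [ql ->]]]|[ls ql]]; first by split=> //; apply/lsat_qf.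
by exists z.2; split=> //; split=> //; apply/lsat_qf.
Qed.

Lemma tpmap_measurable lt (wf : well_founded lt) a :
  (forall g, lt g a -> countable_set (Psi wf phi g)) ->
  forall B, borel (Xdom wf phi a) (Xbasis wf phi a) B ->
    measurable D G (fun z => B (tpmap wf a z)).
Proof.
move=> Psi_countable; apply: (cantor_borel_preimage (Xidx_enumerable Psi_countable)).
  by move=> z Mz; apply: typ_dom.
by move=> i _; apply: typ_measurable diag0_mod_seq_measurable a i.
Qed.
End ModelsWithTuples.

Lemma sigma11_ext T (D : T -> Prop) B (A A' : T -> Prop) :
  sigma11 D B A -> (forall x, A x <-> A' x) -> sigma11 D B A'.
Proof. by move=> [P [BP PA]] AA'; exists P; split=> // x; rewrite -AA'. Qed.

Section CodedTypes.
Variables (L : lang) (lt : nat -> nat -> Prop) (wf : well_founded lt).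
Variables (phi : form L) (a : nat).
Hypotheses (phi_sentence : sentence phi)
  (Psi_countable : forall g, lt g a -> countable_set (Psi wf phi g)).
Local Notation DX := (Xdom wf phi a).
Local Notation BX := (Xbasis wf phi a).
Local Notation D := (fun w : (Idx L -> Prop) * (nat -> nat) => DX w.1).
Local Notation G := (open_in D (baire_prod_basis BX)).

Let top (S : Idx L -> Prop) :=
  (forall i, List.In i [::] -> S i) /\ (forall i, List.In i [::] -> ~ S i).
Let BX_top : BX top. Proof. by exists [::], [::]. Qed.
Let DX_top S : DX S -> top S. Proof. by []. Qed.

Definition codes_typ (C : countType) (c0 : C) (empty : bool)
    (w : (Idx L -> Prop) * (nat -> nat)) :=
  pmodel phi (decode_pstr L c0 w.2) /\ (empty -> decode_tuple C w.2 = [::]) /\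
  forall i, Xidx wf phi a i -> (w.1 i <-> typ wf a (decode_pstr L c0 w.2) i).

Lemma codes_typ_measurable C c0 empty : measurable D G (@codes_typ C c0 empty).
Proof.
rewrite /codes_typ; apply: measurableI.
  apply: (measurable_ext _ (sat_decode_measurable BX_top DX_top c0 phi (fun _ => c0))) => w _.
  exact: iff_sym (sentence_models _ _ phi_sentence).
apply: measurableI.
  apply: measurable_imply => _.
  apply: (locally_constant_measurable BX_top DX_top (Q := fun y => decode_tuple C y = [::])).
  exact: (locally_constant_comp (eq^~ [::]) (locally_constant_decode_tuple C)).
apply: (measurable_forall_in (Xidx_enumerable Psi_countable)) => i Xi; apply: measurable_iff.
  have : BX (fun S => (forall j, List.In j [:: i] -> S j) /\ (forall j, List.In j [::] -> ~ S j)).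
    by exists [:: i], [::]; split=> // j [<-|].
  move/(measurable_fst DX); apply: measurable_ext => w _.
  split=> [[wi _]|wi]; first by apply: wi; left.
  by split=> // j [<-|].
apply: typ_measurable => b l.
exact: (locally_constant_measurable BX_top DX_top (locally_constant_diag0 c0 b l)).
Qed.

Lemma codes_typ_sound (C : countType) (c0 : C) empty w : DX w.1 -> codes_typ c0 empty w ->
  exists p, pmodel phi p /\ (empty -> tup p = [::]) /\ w.1 = typ wf a p.
Proof.
move=> Dw [Mp [empty_nil w_typ]]; exists (decode_pstr L c0 w.2); do 2!split=> //.
apply/predeqP => i; have [Xi|nXi] := EM (Xidx wf phi a i); first exact: w_typ.
by split=> [/Dw|/(typ_dom Mp)] /nXi.
Qed.

Lemma codes_typ_complete (C : countType) (empty : bool) p (h : car p -> C) :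
  bijective h -> pmodel phi p -> (empty -> tup p = [::]) ->
  exists y, codes_typ (h (pt p)) empty (typ wf a p, y).
Proof.
case: p h => T t0 M s /= h [k hK kK] Mp empty_nil.
have [y [yM ys]] := decode_onto (h t0) (transport h k M) (map h s).
exists y; rewrite /codes_typ /decode_pstr yM ys; split; first exact: models_transport.
split; first by move=> /empty_nil ->.
by move=> i _; rewrite -(typ_transport wf hK kK).
Qed.

Definition coded_typ (empty : bool) w :=
  (exists c0 : nat, codes_typ c0 empty w) \/ exists n (c0 : 'I_n), codes_typ c0 empty w.

Lemma typ_sigma11 (empty : bool) :
  sigma11 DX BX (fun S => exists p, pmodel phi p /\ (empty -> tup p = [::]) /\ S = typ wf a p).
Proof.
exists (fun w => DX w.1 /\ coded_typ empty w); split.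
  change (measurable D G (coded_typ empty)); apply: measurableU; apply: measurable_exists.
    by move=> c0; apply: codes_typ_measurable.
  by move=> n; apply: measurable_exists => c0; apply: codes_typ_measurable.
move=> S; split=> [[p [Mp [empty_nil ->]]]|[y [DS [[c0 cS]|[n [c0 cS]]]]]]; last 2 first.
- exact: codes_typ_sound DS cS.
- exact: codes_typ_sound DS cS.
have [[h h_bij]|[n [h h_bij]]] := countType_bijective (car p);
  have [y cy] := codes_typ_complete h_bij Mp empty_nil;
  exists y; split; try exact: typ_dom.
- by left; exists (h (pt p)).
- by right; exists n, (h (pt p)).
Qed.
End CodedTypes.

Theorem lemma13 (L : lang) (phi : form L) (hphi : sentence phi)
  (lt : nat -> nat -> Prop) (wf : well_founded lt)
  (lt_trans : forall x y z, lt x y -> lt y z -> lt x z)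
  (lt_total : forall x y, lt x y \/ x = y \/ lt y x)
  (a : nat)
  (hcount : forall g, lt g a -> countable_set (Psi wf phi g)) :
  ((forall z, ModSeq phi z -> Xdom wf phi a (tpmap wf a z)) /\
   (forall B, borel (Xdom wf phi a) (Xbasis wf phi a) B ->
      borel (ModSeq phi) (@mod_seq_basis L)
            (fun z => ModSeq phi z /\ B (tpmap wf a z)))) /\
  sigma11 (Xdom wf phi a) (Xbasis wf phi a) (PsiX wf phi a) /\
  sigma11 (Xdom wf phi a) (Xbasis wf phi a) (PhiX wf phi a).
Proof.
(* Well-foundedness of lt is all the recursion needs; lt_trans and lt_total are unused. *)
split; first by split=> [z Mz|]; [apply: typ_dom | apply: tpmap_measurable].
split.
  apply: sigma11_ext (typ_sigma11 hphi hcount false) _ => S.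
  by split=> [[p [Mp [_ ->]]]|[p [Mp ->]]]; exists p.
apply: sigma11_ext (typ_sigma11 hphi hcount true) _ => S.
by split=> [[p [Mp [/(_ isT) p_nil ->]]]|[p [Mp [p_nil ->]]]]; exists p.
Qed.
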